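(* Let $\kappa_1,\kappa_2$ be real constants, let $\delta\neq 0$ be a real constant, let $F$ be a smooth real function of one variable and let $G$ be any antiderivative of $F$ (i.e. $G'=F$). Consider the system $$\sigma_r+\frac{\kappa_1\sigma}{r}=\delta\,u_{tt},\qquad u_r+\frac{\kappa_2 u}{r}=\frac{1}{\delta}F(\sigma)$$ for smooth functions $\sigma(r,t)$, $u(r,t)$ with $r>0$. Then every smooth solution $(\sigma,u)$ satisfies the three conservation laws $$\partial_r\big(r^{\kappa_1}\sigma\big)+\partial_t\big(-\delta r^{\kappa_1}u_t\big)=0,$$ $$\partial_r\big(r^{\kappa_1}t\sigma\big)+\partial_t\big(\delta r^{\kappa_1}(u-tu_t)\big)=0,$$ $$\partial_r\big(r^{\kappa_1+\kappa_2}u\,\sigma_t\big)+\partial_t\Big(r^{\kappa_1+\kappa_2}\Big(\tfrac{\delta}{2}\big(u_t^2-2uu_{tt}\big)-\tfrac{1}{\delta}G(\sigma)\Big)\Big)=0.$$ These correspond to the multipliers $(\Lambda^1,\Lambda^2)=(r^{\kappa_1},0)$, $(tr^{\kappa_1},0)$ and $(-r^{\kappa_1+\kappa_2}u_t,\ r^{\kappa_1+\kappa_2}\sigma_t)$, respectively, for the equations $\sigma_r+\kappa_1\sigma/r-\delta u_{tt}=0$, $u_r+\kappa_2u/r-F(\sigma)/\delta=0$.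
   Context: Subscripts denote partial derivatives. The system models shear waves in cylindrical geometry, with $\sigma$ the stress and $u$ the displacement and with constitutive relation (strain) $=F(\sigma)$. *)

From Stdlib Require Import Reals List.
From Coquelicot Require Import Coquelicot.
Open Scope R_scope.

(* Partial derivative of a two-variable function f(r,t):
   d = true : with respect to r ; d = false : with respect to t. *)
Definition pd (d : bool) (f : R -> R -> R) : R -> R -> R :=
  fun r t => if d then Derive (fun x => f x t) r else Derive (fun y => f r y) t.

Definition d_r (f : R -> R -> R) := pd true f.
Definition d_t (f : R -> R -> R) := pd false f.

Fixpoint pd_iter (l : list bool) (f : R -> R -> R) : R -> R -> R :=
  match l with
  | nil => f
  | d :: l' => pd d (pd_iter l' f)
  end.

Definition smooth_half_plane (f : R -> R -> R) : Prop :=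
  forall (l : list bool) (r t : R), 0 < r ->
    ex_derive (fun x => pd_iter l f x t) r /\
    ex_derive (fun y => pd_iter l f r y) t /\
    continuous (fun p : R * R => pd_iter l f (fst p) (snd p)) (r, t).

Definition smooth1 (f : R -> R) : Prop :=
  forall (n : nat) (x : R), ex_derive (Derive_n f n) x.

(* Each flux pair has divergence equal to a combination of the residuals of the
   two equations.  The key observation is that [d_r f + k f / r] is
   [r^-k d_r (r^k f)], so the weight [r^k] turns the radial operators of the
   system into exact [r]-derivatives.  For the third law one also uses the
   [t]-derivative of the first equation (hence equality of mixed partials of
   [sigma]) and the chain rule [d_t G(sigma) = F(sigma) d_t sigma]. *)

From Stdlib Require Import Reals Lra List.
From Coquelicot Require Import Coquelicot.
Import ListNotations.
Open Scope R_scope.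

Lemma is_derive_Rpower (k r : R) :
  0 < r -> is_derive (fun x => Rpower x k) r (k * Rpower r k / r).
Proof.
intros Hr. apply is_derive_Reals.
replace (k * Rpower r k / r) with (k * Rpower r (k - 1)).
- apply derivable_pt_lim_power; exact Hr.
- replace (Rpower r k) with (Rpower r (k - 1) * Rpower r 1).
  + rewrite Rpower_1 by exact Hr. field. lra.
  + rewrite <- Rpower_plus. f_equal. ring.
Qed.

Lemma d_r_ext (f g : R -> R -> R) (r t : R) :
  (forall x y, f x y = g x y) -> d_r f r t = d_r g r t.
Proof. intros Hfg. apply Derive_ext. intros x. apply Hfg. Qed.

Lemma d_r_scal (c : R -> R) (f : R -> R -> R) (r t : R) :
  d_r (fun r t => c t * f r t) r t = c t * d_r f r t.
Proof. apply Derive_scal. Qed.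

Lemma d_t_scal (c : R -> R) (f : R -> R -> R) (r t : R) :
  d_t (fun r t => c r * f r t) r t = c r * d_t f r t.
Proof. apply Derive_scal. Qed.

Lemma d_r_Rpower_mul (k : R) (f : R -> R -> R) (r t : R) :
  0 < r -> ex_derive (fun x => f x t) r ->
  d_r (fun r t => Rpower r k * f r t) r t = Rpower r k * (d_r f r t + k * f r t / r).
Proof.
intros Hr Hf. unfold d_r, pd.
rewrite Derive_mult by (exact (ex_intro _ _ (is_derive_Rpower k r Hr)) || exact Hf).
replace (Derive (fun x => Rpower x k) r) with (k * Rpower r k / r)
  by (symmetry; apply is_derive_unique, is_derive_Rpower, Hr).
field. lra.
Qed.

Lemma d_t_eq0 (f : R -> R -> R) (r t : R) :
  (forall y, f r y = 0) -> d_t f r t = 0.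
Proof.
intros Hf. unfold d_t, pd.
rewrite (Derive_ext _ (fun _ => 0)) by exact Hf.
apply Derive_const.
Qed.

Section SmoothHalfPlane.

Variable f : R -> R -> R.
Hypothesis Hf : smooth_half_plane f.

Lemma smooth_ex_d_r (l : list bool) (r t : R) :
  0 < r -> ex_derive (fun x => pd_iter l f x t) r.
Proof. intros Hr. exact (proj1 (Hf l r t Hr)). Qed.

Lemma smooth_ex_d_t (l : list bool) (r t : R) :
  0 < r -> ex_derive (fun y => pd_iter l f r y) t.
Proof. intros Hr. exact (proj1 (proj2 (Hf l r t Hr))). Qed.

Lemma smooth_d_r_d_t_comm (r t : R) : 0 < r -> d_r (d_t f) r t = d_t (d_r f) r t.
Proof.
intros Hr. apply Schwarz.
- exists (mkposreal r Hr). intros x y Hx _. simpl in Hx.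
  assert (Hx0 : 0 < x) by (apply Rabs_def2 in Hx; lra).
  repeat split.
  + exact (smooth_ex_d_r [] x y Hx0).
  + exact (smooth_ex_d_t [] x y Hx0).
  + exact (smooth_ex_d_r [false] x y Hx0).
  + exact (smooth_ex_d_t [true] x y Hx0).
- apply continuity_2d_pt_filterlim. exact (proj2 (proj2 (Hf [true; false] r t Hr))).
- apply continuity_2d_pt_filterlim. exact (proj2 (proj2 (Hf [false; true] r t Hr))).
Qed.

End SmoothHalfPlane.

Section ConservationLaws.

Variables k1 k2 delta : R.
Variables F G : R -> R.
Variables sigma u : R -> R -> R.
Hypothesis smooth_sigma : smooth_half_plane sigma.
Hypothesis smooth_u : smooth_half_plane u.
Hypothesis G_primitive : forall x, is_derive G x (F x).

Definition momentum_residual (r t : R) : R :=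
  d_r sigma r t + k1 * sigma r t / r - delta * d_t (d_t u) r t.

Definition strain_residual (r t : R) : R :=
  d_r u r t + k2 * u r t / r - / delta * F (sigma r t).

Lemma conservation_law1_characteristic (r t : R) : 0 < r ->
  d_r (fun r t => Rpower r k1 * sigma r t) r t
    + d_t (fun r t => - delta * Rpower r k1 * d_t u r t) r t
  = Rpower r k1 * momentum_residual r t.
Proof.
intros Hr. unfold momentum_residual.
rewrite d_r_Rpower_mul by (exact Hr || exact (smooth_ex_d_r sigma smooth_sigma [] r t Hr)).
rewrite (d_t_scal (fun r => - delta * Rpower r k1) (d_t u)).
ring.
Qed.

Lemma conservation_law2_characteristic (r t : R) : 0 < r ->
  d_r (fun r t => Rpower r k1 * t * sigma r t) r t
    + d_t (fun r t => delta * Rpower r k1 * (u r t - t * d_t u r t)) r t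
  = t * Rpower r k1 * momentum_residual r t.
Proof.
intros Hr. unfold momentum_residual.
rewrite (d_r_ext _ (fun r t => Rpower r k1 * (t * sigma r t))) by (intros; ring).
rewrite d_r_Rpower_mul
  by (exact Hr || apply ex_derive_scal, (smooth_ex_d_r sigma smooth_sigma [] r t Hr)).
rewrite (d_r_scal (fun t => t) sigma).
rewrite (d_t_scal (fun r => delta * Rpower r k1)).
assert (Hdt : d_t (fun r t => u r t - t * d_t u r t) r t = - t * d_t (d_t u) r t).
{ unfold d_t at 1, pd. apply is_derive_unique. auto_derive.
  - repeat split.
    + exact (smooth_ex_d_t u smooth_u [] r t Hr).
    + exact (smooth_ex_d_t u smooth_u [false] r t Hr).
  - unfold d_t, pd. ring. }
rewrite Hdt. field. lra.
Qed.

Lemma d_t_momentum_residual (r t : R) : 0 < r ->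
  d_t momentum_residual r t
  = d_t (d_r sigma) r t + k1 * d_t sigma r t / r - delta * d_t (d_t (d_t u)) r t.
Proof.
intros Hr. unfold d_t at 1, pd, momentum_residual. apply is_derive_unique. auto_derive.
- repeat split.
  + exact (smooth_ex_d_t sigma smooth_sigma [true] r t Hr).
  + exact (smooth_ex_d_t sigma smooth_sigma [] r t Hr).
  + exact (smooth_ex_d_t u smooth_u [false; false] r t Hr).
- unfold d_t, d_r, pd. field. lra.
Qed.

Lemma d_t_energy_density (r t : R) : 0 < r ->
  d_t (fun r t => delta / 2 * ((d_t u r t) ^ 2 - 2 * u r t * d_t (d_t u) r t)
                  - / delta * G (sigma r t)) r t
  = - delta * u r t * d_t (d_t (d_t u)) r t - / delta * F (sigma r t) * d_t sigma r t.
Proof.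
intros Hr. unfold d_t at 1, pd. apply is_derive_unique. auto_derive.
- repeat split.
  + exact (smooth_ex_d_t u smooth_u [false] r t Hr).
  + exact (smooth_ex_d_t u smooth_u [] r t Hr).
  + exact (smooth_ex_d_t u smooth_u [false; false] r t Hr).
  + exact (ex_intro _ _ (G_primitive (sigma r t))).
  + exact (smooth_ex_d_t sigma smooth_sigma [] r t Hr).
- replace (Derive (fun x => G x) (sigma r t)) with (F (sigma r t))
    by (symmetry; apply is_derive_unique, G_primitive).
  (* [field] must cancel [/ 2 * 2]; hiding [/ delta] spares it a
     [delta <> 0] side condition. *)
  unfold d_t, pd. set (inv_delta := / delta). field.
Qed.

Lemma conservation_law3_characteristic (r t : R) : 0 < r ->
  d_r (fun r t => Rpower r (k1 + k2) * u r t * d_t sigma r t) r t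
    + d_t (fun r t => Rpower r (k1 + k2) *
             (delta / 2 * ((d_t u r t) ^ 2 - 2 * u r t * d_t (d_t u) r t)
              - / delta * G (sigma r t))) r t
  = Rpower r (k1 + k2) *
      (d_t sigma r t * strain_residual r t + u r t * d_t momentum_residual r t).
Proof.
intros Hr.
assert (Hur : ex_derive (fun x => u x t) r)
  by exact (smooth_ex_d_r u smooth_u [] r t Hr).
assert (Hstr : ex_derive (fun x => d_t sigma x t) r)
  by exact (smooth_ex_d_r sigma smooth_sigma [false] r t Hr).
rewrite (d_r_ext _ (fun r t => Rpower r (k1 + k2) * (u r t * d_t sigma r t)))
  by (intros; ring).
rewrite d_r_Rpower_mul by (exact Hr || exact (ex_derive_mult _ _ _ Hur Hstr)).
assert (Hprod : d_r (fun r t => u r t * d_t sigma r t) r t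
                = d_r u r t * d_t sigma r t + u r t * d_r (d_t sigma) r t)
  by exact (Derive_mult _ _ _ Hur Hstr).
rewrite Hprod, (smooth_d_r_d_t_comm sigma smooth_sigma r t Hr).
rewrite (d_t_scal (fun r => Rpower r (k1 + k2))), d_t_energy_density by exact Hr.
rewrite d_t_momentum_residual by exact Hr.
unfold strain_residual. set (inv_delta := / delta). field. lra.
Qed.

End ConservationLaws.

Theorem mainTheorem1
  (k1 k2 delta : R) (F G : R -> R) (sigma u : R -> R -> R) :
  delta <> 0 ->
  smooth1 F ->
  (forall x, is_derive G x (F x)) ->
  smooth_half_plane sigma ->
  smooth_half_plane u ->
  (forall r t, 0 < r ->
     d_r sigma r t + k1 * sigma r t / r = delta * d_t (d_t u) r t) ->
  (forall r t, 0 < r ->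
     d_r u r t + k2 * u r t / r = / delta * F (sigma r t)) ->
  forall r t, 0 < r ->
    d_r (fun r t => Rpower r k1 * sigma r t) r t
      + d_t (fun r t => - delta * Rpower r k1 * d_t u r t) r t = 0
    /\
    d_r (fun r t => Rpower r k1 * t * sigma r t) r t
      + d_t (fun r t => delta * Rpower r k1 * (u r t - t * d_t u r t)) r t = 0
    /\
    d_r (fun r t => Rpower r (k1 + k2) * u r t * d_t sigma r t) r t
      + d_t (fun r t => Rpower r (k1 + k2) *
               (delta / 2 * ((d_t u r t) ^ 2 - 2 * u r t * d_t (d_t u) r t)
                - / delta * G (sigma r t))) r t = 0.
Proof.
intros _ _ HG Hs Hu Hmomentum Hstrain r t Hr.
assert (Rmomentum : forall r t, 0 < r -> momentum_residual k1 delta sigma u r t = 0).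
{ intros r' t' Hr'. unfold momentum_residual. rewrite Hmomentum by exact Hr'. ring. }
assert (Rstrain : forall r t, 0 < r -> strain_residual k2 delta F sigma u r t = 0).
{ intros r' t' Hr'. unfold strain_residual. rewrite Hstrain by exact Hr'. ring. }
split; [| split].
- rewrite (conservation_law1_characteristic k1 delta sigma u Hs r t Hr).
  rewrite Rmomentum by exact Hr. ring.
- rewrite (conservation_law2_characteristic k1 delta sigma u Hs Hu r t Hr).
  rewrite Rmomentum by exact Hr. ring.
- rewrite (conservation_law3_characteristic k1 k2 delta F G sigma u Hs Hu HG r t Hr).
  rewrite Rstrain, (d_t_eq0 _ r t (fun y => Rmomentum r y Hr)) by exact Hr. ring.
Qed.
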